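(* Let $G$ be a connected graph of order $n\ge2$ with maximum degree $\Delta(G)$. Then $\operatorname{ZIR}(G)\le\frac{\Delta(G)}{\Delta(G)+1}\,n$, and this bound is sharp.
   Context: A nonempty $F\subseteq V(G)$ is a fort if every $v\notin F$ has $|N(v)\cap F|\ne1$. A private fort of $x\in S$ relative to $S$ is a fort $F$ with $S\cap F=\{x\}$; $S$ is a ZIr-set if every element of $S$ has a private fort. $\operatorname{ZIR}(G)$ is the maximum cardinality of an inclusion-maximal ZIr-set. *)

(* A simple graph on a finite vertex type T is a symmetric,
   irreflexive boolean relation e : rel T. *)
From mathcomp Require Import all_boot.
Set Implicit Arguments. Unset Strict Implicit. Unset Printing Implicit Defensive.

Section ZIR.
Variables (T : finType) (e : rel T).

Definition nbhd (v : T) : {set T} := [set u | e v u].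

Definition maxdeg : nat := \max_(v : T) #|nbhd v|.

Definition connectedb : bool := [forall x, forall y, connect e x y].

Definition fort (F : {set T}) : bool :=
  (F != set0) && [forall v, (v \notin F) ==> (#|nbhd v :&: F| != 1)].

Definition private_fort (S : {set T}) (x : T) (F : {set T}) : bool :=
  fort F && (S :&: F == [set x]).

Definition ZIr_set (S : {set T}) : bool :=
  [forall x in S, exists F : {set T}, private_fort S x F].

Definition maximal_ZIr_set (S : {set T}) : bool :=
  ZIr_set S && [forall S' : {set T}, (S \proper S') ==> ~~ ZIr_set S'].

Definition ZIR : nat := \max_(S : {set T} | maximal_ZIr_set S) #|S|.

End ZIR.

(* If every neighbour of x lay in the ZIr-set S, then for a neighbour v of x
   the private fort F of v would meet N(x) exactly in v, although x is outside
   F.  Hence every vertex of S has a neighbour outside S, and counting the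
   edges between S and its complement gives |S| <= Delta (n - |S|).
   Sharpness is witnessed by the complete graph K_(Delta+1): any two vertices
   form a fort, so all vertices but one form a ZIr-set, maximal by the bound. *)
From mathcomp Require Import all_boot.
From mathcomp Require Import zify.
Set Implicit Arguments. Unset Strict Implicit. Unset Printing Implicit Defensive.

Section ZIrBound.
Variables (T : finType) (e : rel T).
Hypotheses (e_sym : symmetric e) (e_irr : irreflexive e).

Lemma ZIr_set_nbhd_notin S x v :
  ZIr_set e S -> x \in S -> e x v -> exists2 y, e x y & y \notin S.
Proof.
move=> /forall_inP ZIrS xS xv.
have [/existsP[y /andP[xy yS]] | /existsPn nbhd_inS] :=
  boolP [exists y, e x y && (y \notin S)]; first by exists y.
have nbhdS w : e x w -> w \in S by move=> xw; move: (nbhd_inS w); rewrite xw negbK.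
have [F /andP[/andP[_ /forallP fortF] /eqP SF_v]] := existsP (ZIrS v (nbhdS v xv)).
have SF_eq w : (w \in S) && (w \in F) = (w == v).
  by move: SF_v => /setP/(_ w); rewrite !inE.
have xNF : x \notin F.
  by apply: contraTN xv => xF; move: (SF_eq x); rewrite xS xF => /esym/eqP->; rewrite e_irr.
have nbhdxF : nbhd e x :&: F = [set v].
  apply/setP=> w; rewrite !inE -SF_eq.
  have [wF|] := boolP (w \in F); rewrite ?andbT ?andbF //.
  apply/idP/idP=> [/nbhdS // | wS].
  by move: (SF_eq w); rewrite wS wF => /esym/eqP->.
by move: (fortF x); rewrite xNF nbhdxF cards1.
Qed.

Lemma card_leq_maxdeg_setC (S : {set T}) :
  (forall x, x \in S -> exists2 y, e x y & y \notin S) ->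
  #|S| <= #|~: S| * maxdeg e.
Proof.
move=> out_nbhd.
have S_le_cut : #|S| <= \sum_(x in S) \sum_(y in ~: S) (e x y : nat).
  rewrite -sum1_card leq_sum // => x /out_nbhd[y xy yS].
  by rewrite (bigD1 y) ?inE //= xy leq_addr.
have deg_le y : \sum_(x in S) (e y x : nat) <= maxdeg e.
  apply: leq_trans (leq_bigmax y); rewrite -sum1_card.
  rewrite [X in _ <= X]big_mkcond [X in X <= _]big_mkcond /=.
  by apply: leq_sum => x _; rewrite inE; case: (x \in S); case: (e y x).
rewrite exchange_big /= in S_le_cut.
apply: (leq_trans S_le_cut); rewrite -sum_nat_const; apply: leq_sum => y _.
by under eq_bigr do rewrite e_sym; apply: deg_le.
Qed.

Hypothesis no_isolated : forall x, exists y, e x y.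

Lemma ZIr_set_card_bound S :
  ZIr_set e S -> #|S| * (maxdeg e).+1 <= maxdeg e * #|T|.
Proof.
move=> ZIrS.
have : #|S| <= #|~: S| * maxdeg e.
  apply: card_leq_maxdeg_setC => x xS.
  by have [v xv] := no_isolated x; apply: ZIr_set_nbhd_notin xv.
by have := cardsC S; nia.
Qed.

Lemma ZIR_bound : ZIR e * (maxdeg e).+1 <= maxdeg e * #|T|.
Proof.
rewrite /ZIR; elim/big_ind: _ => // [m n m_le n_le | S /andP[ZIrS _]].
  by rewrite /maxn; case: ifP.
exact: ZIr_set_card_bound.
Qed.

End ZIrBound.

Lemma connected_no_isolated (T : finType) (e : rel T) :
  connectedb e -> 1 < #|T| -> forall x, exists y, e x y.
Proof.
move=> /forallP conn T_gt1 x.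
have [y] : exists y, y \in [set~ x] by apply/card_gt0P; rewrite cardsC1 -ltnS prednK // ltnW.
rewrite !inE => yNx.
case/connectP: (forallP (conn x) y) => [[|z p]] /= => [_ y_x | /andP[xz _] _].
  by rewrite y_x eqxx in yNx.
by exists z.
Qed.

Section CompleteGraph.
Variable T : finType.
Hypothesis T_gt1 : 1 < #|T|.

Definition complete_rel : rel T := fun x y => x != y.

Lemma complete_rel_sym : symmetric complete_rel.
Proof. by move=> x y; rewrite /complete_rel eq_sym. Qed.

Lemma complete_rel_irr : irreflexive complete_rel.
Proof. by move=> x; rewrite /complete_rel eqxx. Qed.

Lemma complete_connected : connectedb complete_rel.
Proof.
apply/forallP=> x; apply/forallP=> y.
by have [->|xy] := eqVneq x y; [exact: connect0 | exact: connect1].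
Qed.

Lemma nbhd_complete x : nbhd complete_rel x = [set~ x].
Proof. by apply/setP=> y; rewrite !inE /complete_rel eq_sym. Qed.

Lemma maxdeg_complete : maxdeg complete_rel = #|T|.-1.
Proof.
have deg x : #|nbhd complete_rel x| = #|T|.-1 by rewrite nbhd_complete cardsC1.
have [x _] : exists x, x \in T by apply/card_gt0P; rewrite ltnW.
apply/eqP; rewrite eqn_leq (leq_trans _ (leq_bigmax x)) ?deg // /maxdeg.
by rewrite andbT; apply/bigmax_leqP=> y _; rewrite deg.
Qed.

Lemma fort_complete_pair x y : x != y -> fort complete_rel [set x; y].
Proof.
move=> xy; apply/andP; split; first by apply/set0Pn; exists x; rewrite !inE eqxx.
apply/forallP=> v; apply/implyP; rewrite !inE negb_or => /andP[vx vy].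
suff -> : nbhd complete_rel v :&: [set x; y] = [set x; y] by rewrite cards2 xy.
by apply/setIidPr/subsetP=> w; rewrite nbhd_complete !inE => /orP[]/eqP->; rewrite eq_sym.
Qed.

Lemma ZIr_set_complete_setC1 a : ZIr_set complete_rel [set~ a].
Proof.
apply/forall_inP=> x; rewrite !inE => xa; apply/existsP; exists [set x; a].
rewrite /private_fort fort_complete_pair //=; apply/eqP/setP=> w; rewrite !inE.
by have [->|_] := eqVneq w x; [rewrite xa | case: (w == a)].
Qed.

Lemma ZIR_complete : ZIR complete_rel = #|T|.-1.
Proof.
have T_gt0 : 0 < #|T| := ltnW T_gt1.
have no_iso := connected_no_isolated complete_connected T_gt1.
have card_bound S : ZIr_set complete_rel S -> #|S| <= #|T|.-1.
  move/(ZIr_set_card_bound complete_rel_sym complete_rel_irr no_iso).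
  by rewrite maxdeg_complete (prednK T_gt0) leq_pmul2r.
have [a _] : exists a, a \in T by apply/card_gt0P.
apply/eqP; rewrite eqn_leq.
have := ZIR_bound complete_rel_sym complete_rel_irr no_iso.
rewrite maxdeg_complete (prednK T_gt0) leq_pmul2r // => -> /=.
rewrite -(cardsC1 a) /ZIR.
apply: (leq_bigmax_cond (F := fun S : {set T} => #|S|)).
rewrite /maximal_ZIr_set ZIr_set_complete_setC1 /=.
apply/forallP=> S; apply/implyP=> aS; apply: contraTN (proper_card aS) => ZIrS.
by rewrite -leqNgt cardsC1 card_bound.
Qed.

End CompleteGraph.

Theorem proposition4p10 :
  (forall (T : finType) (e : rel T),
      symmetric e -> irreflexive e -> connectedb e -> 2 <= #|T| ->
      ZIR e * (maxdeg e).+1 <= maxdeg e * #|T|)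
  /\
  (forall D : nat, 1 <= D ->
      exists (T : finType) (e : rel T),
        symmetric e /\ irreflexive e /\ connectedb e /\ 2 <= #|T| /\
        maxdeg e = D /\ ZIR e * D.+1 = D * #|T|).
Proof.
split=> [T e e_sym e_irr conn T_gt1 | D D_gt0].
  exact: ZIR_bound e_sym e_irr (connected_no_isolated conn T_gt1).
have card_KD : #|'I_D.+1| = D.+1 := card_ord D.+1.
have KD_gt1 : 1 < #|'I_D.+1| by rewrite card_KD.
have maxdeg_KD : maxdeg (@complete_rel 'I_D.+1) = D.
  by rewrite maxdeg_complete card_KD.
have ZIR_KD : ZIR (@complete_rel 'I_D.+1) * D.+1 = D * #|'I_D.+1|.
  by rewrite (ZIR_complete KD_gt1) card_KD mulnC.
exists 'I_D.+1, (@complete_rel _).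
split; first exact: complete_rel_sym.
split; first exact: complete_rel_irr.
split; first exact: complete_connected.
by split; [exact: KD_gt1 | split; [exact: maxdeg_KD | exact: ZIR_KD]].
Qed.
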